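(* Let $\rho\in[-1,1]$, let $A\in\mathbb{R}^{n\times n}$ be a normalized elliptic matrix with parameter $\rho$, $\boldsymbol u^0\in\mathbb{R}^n$, $B\in\mathbb{R}^{n\times p}$, and let $h_0,h_1,\dots:\mathbb{R}^{p+1}\to\mathbb{R}$ be functions with a fixed partial derivative $\partial_1h_k$ in the first argument. Consider the iterates $\boldsymbol u^{k+1}=A\boldsymbol q^k-\rho d_k\boldsymbol q^{k-1}$, $k\ge0$, with the notation of the context. Then $\boldsymbol u^1=A\boldsymbol q^0=\mathcal I_0(A)$ and for every $k\ge1$, $$\boldsymbol u^{k+1}=\sum_{\ell=1}^k\alpha^k_\ell\boldsymbol u^\ell+\rho\,Q_k(Q_k^\top Q_k)^\dagger\Big(\boldsymbol v^{k,k}-\sum_{\ell=1}^k\alpha^k_\ell\boldsymbol v^{k,\ell-1}\Big)+\mathcal I_k(A).$$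
   Context: $\mathrm{Elliptic}(n,\rho)$: $M_{ii}\sim\mathcal N(0,1+\rho)$, for $i<j$ $(M_{ij},M_{ji})$ centered Gaussian with variances 1 and covariance $\rho$, all independent across $\{M_{ii}\}\cup\{(M_{ij},M_{ji})\}_{i<j}$; $A$ normalized elliptic means $\sqrt nA\sim\mathrm{Elliptic}(n,\rho)$. For $h:\mathbb{R}^{p+1}\to\mathbb{R}$, $h(\boldsymbol u,B)=(h(u_i,B_{i1},\dots,B_{ip}))_i$. Notation: $\boldsymbol q^k=h_k(\boldsymbol u^k,B)$ for $k\ge0$, $\boldsymbol q^{-1}=0$; $d_k=\frac1n\sum_i\partial_1h_k(u^k_i,B_{i,*})$ for $k\ge1$, $d_0=0$; $Q_k=[\boldsymbol q^0,\dots,\boldsymbol q^{k-1}]$, $U_k=[\boldsymbol u^1,\dots,\boldsymbol u^k]\in\mathbb{R}^{n\times k}$; $\dagger$ denotes the Moore–Penrose pseudo-inverse; $P_k=Q_k(Q_k^\top Q_k)^\dagger Q_k^\top$ (orthogonal projection on the column span of $Q_k$), $P_k^\perp=I_n-P_k$, $P_0=0$, $P_0^\perp=I_n$; $\boldsymbol\alpha^k=(\alpha^k_1,\dots,\alpha^k_k)^\top=(Q_k^\top Q_k)^\dagger Q_k^\top\boldsymbol q^k$; for $k\ge1,\ell\ge0$, $\boldsymbol v^{k,\ell}=U_k^\top\boldsymbol q^\ell-d_\ell Q_k^\top\boldsymbol q^{\ell-1}$; $\mathcal I_k(A)=(A-\rho P_kA^\top)P_k^\perp\boldsymbol q^k$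 for $k\ge0$. *)

From HB Require Import structures.
From mathcomp Require Import all_boot all_order all_algebra.
From Stdlib Require Import ClassicalEpsilon.
Set Implicit Arguments. Unset Strict Implicit. Unset Printing Implicit Defensive.
Import Order.TTheory GRing.Theory Num.Theory.
Local Open Scope ring_scope.

Definition is_mpinv (R : realFieldType) (m k : nat)
  (M : 'M[R]_(m, k)) (X : 'M[R]_(k, m)) : Prop :=
  [/\ M *m X *m M = M, X *m M *m X = X,
      (M *m X)^T = M *m X & (X *m M)^T = X *m M].

Definition mpinv (R : realFieldType) (m k : nat) (M : 'M[R]_(m, k)) : 'M[R]_(k, m) :=
  epsilon (inhabits 0) (is_mpinv M).

Section AMP.
Context (R : realFieldType) (n p : nat) (rho : R) (A : 'M[R]_n)
  (u0 : 'cV[R]_n) (B : 'M[R]_(n, p))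
  (h : nat -> R -> 'rV[R]_p -> R)      (* h k (u, b1..bp) *)
  (dh : nat -> R -> 'rV[R]_p -> R).    (* fixed partial derivative d_1 h_k *)

Definition applyh (f : R -> 'rV[R]_p -> R) (x : 'cV[R]_n) : 'cV[R]_n :=
  \col_i f (x i 0) (row i B).

Definition avgf (f : R -> 'rV[R]_p -> R) (x : 'cV[R]_n) : R :=
  (n%:R)^-1 * \sum_(i < n) f (x i 0) (row i B).

(* state k = (u^k, q^{k-1}), with q^{-1} = 0, d_0 = 0 *)
Fixpoint amp_state (k : nat) : 'cV[R]_n * 'cV[R]_n :=
  match k with
  | 0 => (u0, 0)
  | k'.+1 =>
      let uk := (amp_state k').1 in
      let qkm1 := (amp_state k').2 in
      let qk := applyh (h k') uk in
      let dk := if k' is 0 then 0 else avgf (dh k') uk in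
      (A *m qk - (rho * dk) *: qkm1, qk)
  end.

Definition u_ (k : nat) : 'cV[R]_n := (amp_state k).1.
Definition q_ (k : nat) : 'cV[R]_n := applyh (h k) (u_ k).
Definition qprev (k : nat) : 'cV[R]_n := if k is k'.+1 then q_ k' else 0.
Definition d_ (k : nat) : R := if k is 0 then 0 else avgf (dh k) (u_ k).

Definition Qm (k : nat) : 'M[R]_(n, k) := \matrix_(i < n, j < k) q_ j i 0.
Definition Um (k : nat) : 'M[R]_(n, k) := \matrix_(i < n, j < k) u_ j.+1 i 0.

Definition Pm (k : nat) : 'M[R]_n := Qm k *m mpinv ((Qm k)^T *m Qm k) *m (Qm k)^T.
Definition Pperp (k : nat) : 'M[R]_n := 1%:M - Pm k.

(* alpha^k = (Q_k^T Q_k)^+ Q_k^T q^k ; alpha^k_l is entry (l-1) *)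
Definition alpha (k : nat) : 'cV[R]_k :=
  mpinv ((Qm k)^T *m Qm k) *m (Qm k)^T *m q_ k.

Definition vkl (k l : nat) : 'cV[R]_k :=
  (Um k)^T *m q_ l - d_ l *: ((Qm k)^T *m qprev l).

Definition Ik (k : nat) (A' : 'M[R]_n) : 'cV[R]_n :=
  (A' - rho *: (Pm k *m A'^T)) *m Pperp k *m q_ k.

End AMP.

(* Put a = (Q_k^T Q_k)^+ Q_k^T q^k, so that P_k q^k = Q_k a and Q_k^T P_k^perp q^k = 0.
   The recursion gives A Q_k = U_k + rho W_k, where W_k has columns d_l q^(l-1)
   and therefore lies in the column span of Q_k.  Hence
   A q^k = U_k a + rho W_k a + A P_k^perp q^k, and A P_k^perp q^k exceeds I_k(A) by
   rho P_k A^T P_k^perp q^k = rho Q_k (Q_k^T Q_k)^+ U_k^T P_k^perp q^k, because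
   W_k^T P_k^perp = 0.  Expanding the v^(k,l) shows that the middle term of the
   claim is this correction plus rho (W_k a - d_k q^(k-1)). *)

From HB Require Import structures.
From mathcomp Require Import all_boot all_order all_algebra.
From Stdlib Require Import ClassicalEpsilon.
Set Implicit Arguments. Unset Strict Implicit. Unset Printing Implicit Defensive.
Import Order.TTheory GRing.Theory Num.Theory.
Local Open Scope ring_scope.

Section PseudoInverse.
Variable R : realFieldType.

Lemma gram_eq0 m k (X : 'M[R]_(m, k)) : X^T *m X = 0 -> X = 0.
Proof.
move=> XtX0; apply/matrixP => i j; apply/eqP.
have /matrixP/(_ j j)/eqP := XtX0; rewrite !mxE.
rewrite psumr_eq0 => [/allP/(_ i (mem_index_enum _))|l _]; last first.
  by rewrite !mxE -expr2 sqr_ge0.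
by rewrite /= !mxE -expr2 sqrf_eq0.
Qed.

Lemma gram_mulmx_eq0 m k l (Q : 'M[R]_(m, k)) (Y : 'M[R]_(k, l)) :
  Q^T *m Q *m Y = 0 -> Q *m Y = 0.
Proof.
move=> QtQY0; apply: gram_eq0.
by rewrite trmx_mul -!mulmxA (mulmxA Q^T) QtQY0 mulmx0.
Qed.

Lemma row_free_gram_unit r m (F : 'M[R]_(r, m)) : row_free F -> F *m F^T \in unitmx.
Proof.
move=> freeF; rewrite -row_free_unit -kermx_eq0; apply/rowV0P => v /sub_kermxP vFFt0.
have FtVt0 : F^T *m v^T = 0.
  have FFt_sym : (F *m F^T)^T = F *m F^T by rewrite trmx_mul trmxK.
  by apply: gram_mulmx_eq0; rewrite trmxK -FFt_sym -trmx_mul vFFt0 trmx0.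
by apply: (row_free_inj freeF); rewrite mul0mx -[v *m F]trmxK trmx_mul FtVt0 trmx0.
Qed.

Lemma is_mpinv_mulmx m r k (C : 'M[R]_(m, r)) (F : 'M[R]_(r, k)) :
  C^T *m C \in unitmx -> F *m F^T \in unitmx ->
  is_mpinv (C *m F) (F^T *m invmx (F *m F^T) *m invmx (C^T *m C) *m C^T).
Proof.
move=> unitCtC unitFFt.
set iF := invmx (F *m F^T); set iC := invmx (C^T *m C).
have iF_sym : iF^T = iF by rewrite /iF trmx_inv trmx_mul trmxK.
have iC_sym : iC^T = iC by rewrite /iC trmx_inv trmx_mul trmxK.
have MX : C *m F *m (F^T *m iF *m iC *m C^T) = C *m iC *m C^T.
  by rewrite !mulmxA -(mulmxA C F) -(mulmxA C (F *m F^T)) mulmxV // mulmx1.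
have XM : F^T *m iF *m iC *m C^T *m (C *m F) = F^T *m iF *m F.
  by rewrite !mulmxA -(mulmxA _ C^T C) -(mulmxA (F^T *m iF) iC) mulVmx // mulmx1.
split.
- by rewrite MX !mulmxA -(mulmxA _ C^T C) -(mulmxA C iC) mulVmx // mulmx1.
- by rewrite XM !mulmxA -(mulmxA _ F F^T) -(mulmxA (F^T *m iF)) mulmxV // mulmx1.
- by rewrite MX !trmx_mul trmxK iC_sym mulmxA.
- by rewrite XM !trmx_mul trmxK iF_sym mulmxA.
Qed.

Lemma mpinvP m k (M : 'M[R]_(m, k)) : is_mpinv M (mpinv M).
Proof.
apply: epsilon_spec; rewrite -(mulmx_base M).
have freeF := row_base_free M.
have freeCt : row_free (col_base M)^T.
  rewrite /row_free mxrank_tr eqn_leq rank_leq_col /=.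
  by have := mxrankM_maxl (col_base M) (row_base M); rewrite mulmx_base.
have := row_free_gram_unit freeCt; rewrite trmxK => unitCtC.
by eexists; exact: is_mpinv_mulmx unitCtC (row_free_gram_unit freeF).
Qed.

Section GramPseudoInverse.
Variables (m k : nat) (Q : 'M[R]_(m, k)).

Lemma mulmx_mpinv_gramK : Q *m mpinv (Q^T *m Q) *m (Q^T *m Q) = Q.
Proof.
set M := Q^T *m Q; set X := mpinv M; have [MXM _ _ _] := mpinvP M.
have : Q *m (1%:M - X *m M) = 0.
  by apply: gram_mulmx_eq0; rewrite -/M mulmxBr mulmx1 mulmxA MXM subrr.
by rewrite mulmxBr mulmx1 mulmxA => /subr0_eq/esym.
Qed.

Lemma gram_mpinv_mulmxK : Q^T *m Q *m mpinv (Q^T *m Q) *m Q^T = Q^T.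
Proof.
set M := Q^T *m Q; set X := mpinv M; have [MXM _ _ _] := mpinvP M.
have M_sym : M^T = M by rewrite trmx_mul trmxK.
have : Q *m (1%:M - X^T *m M) = 0.
  apply: gram_mulmx_eq0; rewrite -/M mulmxBr mulmx1 mulmxA.
  by rewrite -{2 3}M_sym -!trmx_mul mulmxA MXM M_sym subrr.
rewrite mulmxBr mulmx1 mulmxA => /subr0_eq QXtM.
by rewrite [in RHS]QXtM trmx_mul M_sym trmx_mul trmxK mulmxA.
Qed.

End GramPseudoInverse.

End PseudoInverse.

Section StepDecomposition.
Variables (R : realFieldType) (n k : nat) (rho : R) (A : 'M[R]_n).
Variables (Q U W : 'M[R]_(n, k)) (C : 'M[R]_k).
Hypotheses (AQ : A *m Q = U + rho *: W) (W_Q : W = Q *m C).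
Variable q : 'cV[R]_n.

Local Notation X := (mpinv (Q^T *m Q)).
Local Notation a := (X *m Q^T *m q).

Lemma residual_orthogonal : Q^T *m (q - Q *m a) = 0.
Proof. by rewrite mulmxBr !mulmxA gram_mpinv_mulmxK subrr. Qed.

Lemma Ik_term_eq :
  (A - rho *: (Q *m X *m Q^T *m A^T)) *m (1%:M - Q *m X *m Q^T) *m q =
  A *m q - (U *m a + rho *: (Q *m X *m U^T *m (q - Q *m a) + W *m a)).
Proof.
have Wtr : W^T *m (q - Q *m a) = 0.
  by rewrite W_Q trmx_mul -[_ *m _ *m (q - _)]mulmxA residual_orthogonal mulmx0.
have PAt : Q *m X *m Q^T *m A^T = Q *m X *m U^T + rho *: (Q *m X *m W^T).
  by rewrite -mulmxA -trmx_mul AQ linearD /= linearZ /= mulmxDr scalemxAr.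
set P := Q *m X *m Q^T; set r := q - Q *m a.
have Pperp_q : (1%:M - P) *m q = r by rewrite mulmxBl mul1mx /r !mulmxA.
rewrite -mulmxA Pperp_q mulmxBl -scalemxAl PAt mulmxDl -scalemxAl.
rewrite -(mulmxA _ W^T) Wtr mulmx0 scaler0 addr0.
have Ar : A *m r = A *m q - (U *m a + rho *: (W *m a)).
  by rewrite mulmxBr [A *m (Q *m _)]mulmxA AQ mulmxDl -scalemxAl.
by rewrite Ar -addrA -opprD -addrA -scalerDr [_ + W *m a]addrC.
Qed.

Variables (dk : R) (qp : 'cV[R]_n) (e : 'cV[R]_k).
Hypothesis qp_Q : qp = Q *m e.

Lemma memory_term_eq :
  Q *m X *m (U^T *m q - dk *: (Q^T *m qp) - (U^T *m Q - Q^T *m W) *m a) =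
  Q *m X *m U^T *m (q - Q *m a) + W *m a - dk *: qp.
Proof.
rewrite qp_Q.
have PQ : Q *m X *m Q^T *m Q = Q by rewrite -mulmxA mulmx_mpinv_gramK.
rewrite mulmxBl !mulmxBr -scalemxAr !mulmxA PQ W_Q !mulmxA PQ -W_Q.
by rewrite opprB addrA addrAC [in RHS]addrAC [X in X + _ = _]addrAC.
Qed.

Lemma step_decomposition :
  A *m q - (rho * dk) *: qp =
  U *m a + rho *: (Q *m X *m (U^T *m q - dk *: (Q^T *m qp) - (U^T *m Q - Q^T *m W) *m a))
  + (A - rho *: (Q *m X *m Q^T *m A^T)) *m (1%:M - Q *m X *m Q^T) *m q.
Proof.
by rewrite memory_term_eq Ik_term_eq scalerBr scalerA [U *m a + _]addrA [RHS]addrC subrKA.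
Qed.

End StepDecomposition.

Section ColumnMatrices.
Variable R : comRingType.

Definition mx_of_cols m k (f : 'I_k -> 'cV[R]_m) : 'M[R]_(m, k) :=
  \matrix_(i, j) f j i 0.

Lemma mx_of_cols_mulmx m k (f : 'I_k -> 'cV[R]_m) (c : 'cV[R]_k) :
  mx_of_cols f *m c = \sum_(j < k) c j 0 *: f j.
Proof.
apply/matrixP => i z; rewrite !mxE summxE; apply: eq_bigr => j _.
by rewrite !mxE (ord1 z) mulrC.
Qed.

Lemma mulmx_mx_of_cols m m' k (M : 'M[R]_(m', m)) (f : 'I_k -> 'cV[R]_m) :
  M *m mx_of_cols f = mx_of_cols (fun j => M *m f j).
Proof. by apply/matrixP => i j; rewrite !mxE; apply: eq_bigr => l _; rewrite !mxE. Qed.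

Lemma eq_mx_of_cols m k (f g : 'I_k -> 'cV[R]_m) :
  f =1 g -> mx_of_cols f = mx_of_cols g.
Proof. by move=> fg; apply/matrixP => i j; rewrite !mxE fg. Qed.

Lemma mx_of_colsB m k (f g : 'I_k -> 'cV[R]_m) :
  mx_of_cols (fun j => f j - g j) = mx_of_cols f - mx_of_cols g.
Proof. by apply/matrixP => i j; rewrite !mxE. Qed.

Lemma mx_of_colsDZ m k (c : R) (f g : 'I_k -> 'cV[R]_m) :
  mx_of_cols (fun j => f j + c *: g j) = mx_of_cols f + c *: mx_of_cols g.
Proof. by apply/matrixP => i j; rewrite !mxE. Qed.

End ColumnMatrices.

Section AMPIterates.
Variables (R : realFieldType) (n p : nat) (rho : R) (A : 'M[R]_n) (u0 : 'cV[R]_n).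
Variables (B : 'M[R]_(n, p)) (h dh : nat -> R -> 'rV[R]_p -> R).

Local Notation u := (u_ rho A u0 B h dh).
Local Notation q := (q_ rho A u0 B h dh).
Local Notation qp := (qprev rho A u0 B h dh).
Local Notation d := (d_ rho A u0 B h dh).
Local Notation Q := (Qm rho A u0 B h dh).
Local Notation U := (Um rho A u0 B h dh).
Local Notation alpha := (alpha rho A u0 B h dh).
Local Notation v := (vkl rho A u0 B h dh).

Lemma u_succ k : u k.+1 = A *m q k - (rho * d k) *: qp k.
Proof. by case: k. Qed.

(* Coordinates of q^(j-1) on the columns of Q_k; the zero vector for j = 0. *)
Definition prev_coord k j : 'cV[R]_k := \col_(i < k) (i.+1 == j)%:R.

Lemma qprev_Qm k j : (j <= k)%N -> qp j = Q k *m prev_coord k j.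
Proof.
rewrite [Q k](_ : _ = mx_of_cols (fun i : 'I_k => q i)) // mx_of_cols_mulmx.
case: j => [|j] le_jk; first by rewrite big1 // => i _; rewrite mxE scale0r.
rewrite (bigD1 (Ordinal le_jk)) //= mxE eqxx scale1r big1 ?addr0 // => i ne_ij.
by rewrite mxE eqSS (negbTE (ne_ij : (i : nat) != j)) scale0r.
Qed.

Definition onsager_mx k : 'M[R]_(n, k) := mx_of_cols (fun l : 'I_k => d l *: qp l).

Lemma A_mulmx_Qm k : A *m Q k = U k + rho *: onsager_mx k.
Proof.
rewrite [Q k](_ : _ = mx_of_cols (fun i : 'I_k => q i)) // mulmx_mx_of_cols.
by rewrite -mx_of_colsDZ; apply: eq_mx_of_cols => j; rewrite u_succ scalerA subrK.
Qed.

Lemma onsager_mx_Qm k :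
  onsager_mx k = Q k *m mx_of_cols (fun l : 'I_k => d l *: prev_coord k l).
Proof.
rewrite mulmx_mx_of_cols; apply: eq_mx_of_cols => l.
by rewrite -scalemxAr -qprev_Qm // ltnW.
Qed.

Lemma sum_alpha_u k : \sum_(l < k) alpha k l 0 *: u l.+1 = U k *m alpha k.
Proof. by rewrite [U k](_ : _ = mx_of_cols (fun l : 'I_k => u l.+1)) // mx_of_cols_mulmx. Qed.

Lemma sum_alpha_vkl k :
  \sum_(l < k) alpha k l 0 *: v k l =
  ((U k)^T *m Q k - (Q k)^T *m onsager_mx k) *m alpha k.
Proof.
rewrite -(mx_of_cols_mulmx (fun l : 'I_k => v k l)); congr (_ *m _).
rewrite mulmx_mx_of_cols [(Q k)^T *m _]mulmx_mx_of_cols -mx_of_colsB.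
by apply: eq_mx_of_cols => l; rewrite /vkl scalemxAr.
Qed.

Lemma u_succ_decomposition k :
  u k.+1 =
    \sum_(l < k) alpha k l 0 *: u l.+1
    + rho *: (Q k *m mpinv ((Q k)^T *m Q k)
              *m (v k k - \sum_(l < k) alpha k l 0 *: v k l))
    + Ik rho A u0 B h dh k A.
Proof.
rewrite u_succ sum_alpha_u sum_alpha_vkl /Ik /Pperp /Pm /alpha /vkl.
exact: (step_decomposition (A_mulmx_Qm k) (onsager_mx_Qm k) _ _ (qprev_Qm (leqnn k))).
Qed.

End AMPIterates.

(* The identity is pathwise: it holds for every realization A of the
   normalized elliptic matrix (indeed for every n x n matrix A). *)
Theorem proposition4 (R : realFieldType) (n p : nat) (rho : R)
  (hrho : -1 <= rho <= 1) (A : 'M[R]_n) (u0 : 'cV[R]_n) (B : 'M[R]_(n, p))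
  (h dh : nat -> R -> 'rV[R]_p -> R) :
  let u := u_ rho A u0 B h dh in
  let q := q_ rho A u0 B h dh in
  u 1 = A *m q 0 /\ A *m q 0 = Ik rho A u0 B h dh 0 A /\
  forall k : nat, (1 <= k)%N ->
    u k.+1 =
      \sum_(l < k) (alpha rho A u0 B h dh k) l 0 *: u l.+1
      + rho *: (Qm rho A u0 B h dh k
                *m mpinv ((Qm rho A u0 B h dh k)^T *m Qm rho A u0 B h dh k)
                *m (vkl rho A u0 B h dh k k
                    - \sum_(l < k) (alpha rho A u0 B h dh k) l 0 *: vkl rho A u0 B h dh k l))
      + Ik rho A u0 B h dh k A.
Proof.
move=> u q; split; last split.
- by rewrite /u u_succ mulr0 scale0r subr0.
- have Q0 : Qm rho A u0 B h dh 0 = 0 by apply/matrixP => i [].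
  by rewrite /Ik /Pperp /Pm Q0 !(mul0mx, mulmx0, trmx0, scaler0, subr0, mulmx1).
- by move=> k _; exact: u_succ_decomposition.
Qed.
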